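(* The Lipschitz quaternionic modular group $PSL(2,\mathfrak L)$ is a subgroup of index $3$ of the Hurwitz quaternionic modular group $PSL(2,\mathfrak H)$.
   Context: $\mathbb H$ is the real quaternions. Quaternionic matrices $\begin{pmatrix}a&b\\c&d\end{pmatrix}$ act by $q\mapsto(aq+b)(cq+d)^{-1}$, and matrices differing by a nonzero real scalar are identified. Let $\Im\mathbb H(\mathbb Z)=\{b\mathbf i+c\mathbf j+d\mathbf k: b,c,d\in\mathbb Z\}$; for $\omega\in\Im\mathbb H(\mathbb Z)$ let $\tau_\omega(q)=q+\omega$ (matrix $\begin{pmatrix}1&\omega\\0&1\end{pmatrix}$), and let $T(q)=q^{-1}$ (matrix $\begin{pmatrix}0&1\\1&0\end{pmatrix}$). $PSL(2,\mathfrak L)$ is the group generated by $T$ and all $\tau_\omega$, $\omega\in\Im\mathbb H(\mathbb Z)$. The Hurwitz units are the 24 quaternions $\pm1,\pm\mathbf i,\pm\mathbf j,\pm\mathbf k,\frac12(\pm1\pm\mathbf i\pm\mathbf j\pm\mathbf k)$. For a Hurwitz unit $u$ let $D_u=\begin{pmatrix}u&0\\0&u\end{pmatrix}$, acting by $q\mapsto uqu^{-1}$; $\mathcal U(\mathfrak H)=\{D_u\}$ is a group of 12 transformations. $PSL(2,\mathfrak H)$ is the group generated by $T$, all $\tau_\omega$ ($\omega\in\Im\mathbb H(\mathbb Z)$) and $\mathcal U(\mathfrak H)$. *)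

From Stdlib Require Import Reals ZArith Arith.
Open Scope R_scope.

Record quat := Quat { qr : R; qi : R; qj : R; qk : R }.

Definition qzero : quat := Quat 0 0 0 0.
Definition qone : quat := Quat 1 0 0 0.
Definition qadd (x y : quat) : quat :=
  Quat (qr x + qr y) (qi x + qi y) (qj x + qj y) (qk x + qk y).
(* Hamilton product, with i j = k, j k = i, k i = j, i^2 = j^2 = k^2 = -1. *)
Definition qmul (x y : quat) : quat :=
  Quat (qr x * qr y - qi x * qi y - qj x * qj y - qk x * qk y)
       (qr x * qi y + qi x * qr y + qj x * qk y - qk x * qj y)
       (qr x * qj y - qi x * qk y + qj x * qr y + qk x * qi y)
       (qr x * qk y + qi x * qj y - qj x * qi y + qk x * qr y).
Definition qscale (l : R) (x : quat) : quat :=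
  Quat (l * qr x) (l * qi x) (l * qj x) (l * qk x).

(* 2x2 quaternionic matrices [[a, b], [c, d]]. *)
Record mat2 := Mat2 { ma : quat; mb : quat; mc : quat; md : quat }.

Definition mmul (A B : mat2) : mat2 :=
  Mat2 (qadd (qmul (ma A) (ma B)) (qmul (mb A) (mc B)))
       (qadd (qmul (ma A) (mb B)) (qmul (mb A) (md B)))
       (qadd (qmul (mc A) (ma B)) (qmul (md A) (mc B)))
       (qadd (qmul (mc A) (mb B)) (qmul (md A) (md B))).
Definition mscale (l : R) (A : mat2) : mat2 :=
  Mat2 (qscale l (ma A)) (qscale l (mb A)) (qscale l (mc A)) (qscale l (md A)).
Definition mid : mat2 := Mat2 qone qzero qzero qone.

Definition proj_eq (A B : mat2) : Prop :=
  exists l : R, l <> 0 /\ A = mscale l B.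

Definition omega (b c d : Z) : quat := Quat 0 (IZR b) (IZR c) (IZR d).
Definition tau (w : quat) : mat2 := Mat2 qone w qzero qone.
(* T(q) = q^{-1} *)
Definition Tm : mat2 := Mat2 qzero qone qone qzero.

Definition hurwitz_unit (u : quat) : Prop :=
  u = Quat 1 0 0 0 \/ u = Quat (-1) 0 0 0 \/
  u = Quat 0 1 0 0 \/ u = Quat 0 (-1) 0 0 \/
  u = Quat 0 0 1 0 \/ u = Quat 0 0 (-1) 0 \/
  u = Quat 0 0 0 1 \/ u = Quat 0 0 0 (-1) \/
  (Rabs (qr u) = / 2 /\ Rabs (qi u) = / 2 /\ Rabs (qj u) = / 2 /\ Rabs (qk u) = / 2).

Definition Dm (u : quat) : mat2 := Mat2 u qzero qzero u.

Definition gens_L (g : mat2) : Prop :=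
  g = Tm \/ exists b c d : Z, g = tau (omega b c d).
Definition gens_H (g : mat2) : Prop :=
  gens_L g \/ exists u, hurwitz_unit u /\ g = Dm u.

(* The subgroup of PGL(2,H) (matrices modulo nonzero real scalars) generated
   by a set S of invertible matrices: finite products of generators and their
   inverses, taken up to real scalars. *)
Inductive gen_grp (S : mat2 -> Prop) : mat2 -> Prop :=
| gg_one : gen_grp S mid
| gg_mul : forall g h, S g -> gen_grp S h -> gen_grp S (mmul g h)
| gg_inv : forall g g' h, S g -> proj_eq (mmul g' g) mid ->
    proj_eq (mmul g g') mid -> gen_grp S h -> gen_grp S (mmul g' h)
| gg_proj : forall A B, gen_grp S A -> proj_eq B A -> gen_grp S B.

Definition PSL2_L : mat2 -> Prop := gen_grp gens_L.
Definition PSL2_H : mat2 -> Prop := gen_grp gens_H.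

Definition same_lcoset (L : mat2 -> Prop) (x y : mat2) : Prop :=
  exists l, L l /\ proj_eq y (mmul x l).

Definition subgroup_of (L G : mat2 -> Prop) : Prop :=
  forall A, L A -> G A.

Definition has_index (L G : mat2 -> Prop) (n : nat) : Prop :=
  exists g : nat -> mat2,
    (forall i, (i < n)%nat -> G (g i)) /\
    (forall i j, (i < n)%nat -> (j < n)%nat -> i <> j ->
        ~ same_lcoset L (g i) (g j)) /\
    (forall h, G h -> exists i, (i < n)%nat /\ same_lcoset L (g i) h).

From Stdlib Require Import Reals ZArith Arith Lra Lia List.
Import ListNotations.
Open Scope R_scope.

(* Write L for the Lipschitz integers Z<1, i, j, k> and hw = (1 + i + j + k) / 2.

   Right multiplication by T or by tau_omega (omega in L) replaces the first row (a, b)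
   of a matrix by another basis of the right L-module aL + bL.  Hence, up to a real
   factor, this module is an invariant of the left coset X PSL(2,L).  For D_1, D_hw and
   D_hw^2 it is L, hw L and hw^2 L, no two of which are real multiples of each other:
   the first row determines three distinct cosets.

   Conversely D_hw normalises PSL(2,L): it commutes with T and conjugates tau_omega into
   tau_omega' with omega' a cyclic permutation of omega.  Every Hurwitz unit is hw^m v
   with v a Lipschitz unit, D_v is in PSL(2,L) because D_i = (tau_i T)^3, and
   hw^3 = -1.  So the three cosets D_hw^m PSL(2,L) are stable under left multiplication
   by the generators of PSL(2,H) and exhaust it. *)

Definition qconj (x : quat) : quat := Quat (qr x) (- qi x) (- qj x) (- qk x).

Definition qnorm2 (x : quat) : R := qr x ^ 2 + qi x ^ 2 + qj x ^ 2 + qk x ^ 2.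

Fixpoint qpow (x : quat) (n : nat) : quat :=
  match n with
  | O => qone
  | S n => qmul (qpow x n) x
  end.

Ltac quat_ext :=
  unfold mmul, mscale, mid, Tm, tau, Dm, omega, qconj, qadd, qmul, qscale, qone, qzero in *;
  cbn [ma mb mc md qr qi qj qk] in *;
  repeat match goal with
  | |- Mat2 _ _ _ _ = Mat2 _ _ _ _ => f_equal
  | |- Quat _ _ _ _ = Quat _ _ _ _ => f_equal
  end.

Ltac destruct_quats := repeat match goal with
  | q : quat |- _ => destruct q
  | m : mat2 |- _ => destruct m
  end.

Lemma qmul_assoc x y z : qmul (qmul x y) z = qmul x (qmul y z).
Proof. destruct_quats; quat_ext; ring. Qed.
Lemma qmul_addl x y z : qmul (qadd x y) z = qadd (qmul x z) (qmul y z).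
Proof. destruct_quats; quat_ext; ring. Qed.
Lemma qmul_addr x y z : qmul x (qadd y z) = qadd (qmul x y) (qmul x z).
Proof. destruct_quats; quat_ext; ring. Qed.
Lemma qadd_addACA x y z t : qadd (qadd x y) (qadd z t) = qadd (qadd x z) (qadd y t).
Proof. destruct_quats; quat_ext; ring. Qed.
Lemma qmul1q x : qmul qone x = x.
Proof. destruct_quats; quat_ext; ring. Qed.
Lemma qmulq1 x : qmul x qone = x.
Proof. destruct_quats; quat_ext; ring. Qed.
Lemma qmul0q x : qmul qzero x = qzero.
Proof. destruct_quats; quat_ext; ring. Qed.
Lemma qmulq0 x : qmul x qzero = qzero.
Proof. destruct_quats; quat_ext; ring. Qed.
Lemma qadd0q x : qadd qzero x = x.
Proof. destruct_quats; quat_ext; ring. Qed.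
Lemma qaddq0 x : qadd x qzero = x.
Proof. destruct_quats; quat_ext; ring. Qed.
Lemma qscale1 x : qscale 1 x = x.
Proof. destruct_quats; quat_ext; ring. Qed.
Lemma qscaleA a b x : qscale a (qscale b x) = qscale (a * b) x.
Proof. destruct_quats; quat_ext; ring. Qed.
Lemma qmul_scaler a x y : qmul x (qscale a y) = qscale a (qmul x y).
Proof. destruct_quats; quat_ext; ring. Qed.
Lemma qmul_scale a b x y : qmul (qscale a x) (qscale b y) = qscale (a * b) (qmul x y).
Proof. destruct_quats; quat_ext; ring. Qed.

Lemma qmul_conjr x : qmul x (qconj x) = Quat (qnorm2 x) 0 0 0.
Proof. destruct_quats; unfold qnorm2; quat_ext; ring. Qed.
Lemma qmul_conjl x : qmul (qconj x) x = Quat (qnorm2 x) 0 0 0.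
Proof. destruct_quats; unfold qnorm2; quat_ext; ring. Qed.
Lemma qnorm2M x y : qnorm2 (qmul x y) = qnorm2 x * qnorm2 y.
Proof. destruct_quats; unfold qnorm2; quat_ext; ring. Qed.
Lemma qr_conj_mulC x y : qr (qmul (qconj x) y) = qr (qmul (qconj y) x).
Proof. destruct_quats; quat_ext; ring. Qed.

Lemma qmul_unit_conjK p x : qnorm2 p = 1 -> qmul p (qmul (qconj p) x) = x.
Proof. intros Hp. now rewrite <- qmul_assoc, qmul_conjr, Hp, qmul1q. Qed.
Lemma qmul_conj_unitK p x : qnorm2 p = 1 -> qmul (qconj p) (qmul p x) = x.
Proof. intros Hp. now rewrite <- qmul_assoc, qmul_conjl, Hp, qmul1q. Qed.

Lemma qpow_add x m k : qpow x (m + k) = qmul (qpow x m) (qpow x k).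
Proof.
  induction k as [|k IH]; cbn [qpow].
  - now rewrite Nat.add_0_r, qmulq1.
  - now rewrite Nat.add_succ_r; cbn [qpow]; rewrite IH, qmul_assoc.
Qed.

Lemma mmul_assoc A B C : mmul (mmul A B) C = mmul A (mmul B C).
Proof.
  destruct A, B, C; unfold mmul; cbn; f_equal;
    rewrite ?qmul_addl, ?qmul_addr, ?qmul_assoc; apply qadd_addACA.
Qed.
Lemma mmul_1m A : mmul mid A = A.
Proof. destruct_quats; quat_ext; ring. Qed.
Lemma mmul_m1 A : mmul A mid = A.
Proof. destruct_quats; quat_ext; ring. Qed.
Lemma mmul_scalel l A B : mmul (mscale l A) B = mscale l (mmul A B).
Proof. destruct_quats; quat_ext; ring. Qed.
Lemma mmul_scaler l A B : mmul A (mscale l B) = mscale l (mmul A B).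
Proof. destruct_quats; quat_ext; ring. Qed.
Lemma mscale1 A : mscale 1 A = A.
Proof. destruct_quats; quat_ext; ring. Qed.
Lemma mscaleA a b A : mscale a (mscale b A) = mscale (a * b) A.
Proof. destruct_quats; quat_ext; ring. Qed.

Lemma Dm_mul u v : mmul (Dm u) (Dm v) = Dm (qmul u v).
Proof. destruct_quats; quat_ext; ring. Qed.
Lemma Dm_scale l u : Dm (qscale l u) = mscale l (Dm u).
Proof. destruct_quats; quat_ext; ring. Qed.

Lemma proj_eq_refl A : proj_eq A A.
Proof. exists 1; split; [lra | now rewrite mscale1]. Qed.

Lemma proj_eq_trans A B C : proj_eq A B -> proj_eq B C -> proj_eq A C.
Proof.
  intros [l [Hl ->]] [m [Hm ->]]. exists (l * m); split.
  - now apply Rmult_integral_contrapositive.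
  - now rewrite mscaleA.
Qed.

Lemma proj_eq_mull X A B : proj_eq A B -> proj_eq (mmul X A) (mmul X B).
Proof. intros [l [Hl ->]]. exists l; split; auto. apply mmul_scaler. Qed.

Lemma proj_eq_mulr X A B : proj_eq A B -> proj_eq (mmul A X) (mmul B X).
Proof. intros [l [Hl ->]]. exists l; split; auto. apply mmul_scalel. Qed.

Section GeneratedGroup.

Variable S : mat2 -> Prop.

Lemma gen_grp_mul A B : gen_grp S A -> gen_grp S B -> gen_grp S (mmul A B).
Proof.
  intros HA; revert B;
    induction HA as [|g h Hg Hh IH|g g' h Hg H1 H2 Hh IH|A B' HA IH HP]; intros C HC.
  - now rewrite mmul_1m.
  - rewrite mmul_assoc. apply gg_mul; auto.
  - rewrite mmul_assoc. apply (gg_inv _ g); auto.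
  - destruct HP as [l [Hl ->]]. rewrite mmul_scalel.
    apply (gg_proj _ (mmul A C)); [now apply IH |].
    exists l; split; auto.
Qed.

Lemma gen_grp_gen g : S g -> gen_grp S g.
Proof. intros Hg. rewrite <- (mmul_m1 g). apply gg_mul; [exact Hg | apply gg_one]. Qed.

Lemma gen_grp_mono (S' : mat2 -> Prop) A :
  (forall g, S g -> S' g) -> gen_grp S A -> gen_grp S' A.
Proof.
  intros HS. induction 1.
  - apply gg_one.
  - apply gg_mul; auto.
  - eapply gg_inv; eauto.
  - eapply gg_proj; eauto.
Qed.

(* When every generator has an inverse among the generators, the formal inverses [g']
   of [gg_inv] are real multiples of generators, so closure under left multiplication
   by generators suffices. *)
Lemma gen_grp_ind_left (P : mat2 -> Prop) :
  (forall g, S g -> exists gi, S gi /\ mmul g gi = mid) ->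
  P mid ->
  (forall g h, S g -> P h -> P (mmul g h)) ->
  (forall A B, P A -> proj_eq B A -> P B) ->
  forall h, gen_grp S h -> P h.
Proof.
  intros Hinv Hmid Hmul Hproj.
  induction 1 as [|g h Hg Hh IH|g g' h Hg [l [Hl Hg']] _ Hh IH|A B HA IH HP];
    [auto | auto | | now apply (Hproj A)].
  destruct (Hinv g Hg) as [gi [Hgi Egi]].
  assert (E : g' = mscale l gi).
  { rewrite <- (mmul_m1 g'), <- Egi, <- mmul_assoc, Hg', mmul_scalel, mmul_1m.
    reflexivity. }
  apply (Hproj (mmul gi h)); [now apply Hmul |].
  exists l; split; auto. rewrite E. apply mmul_scalel.
Qed.

End GeneratedGroup.

Definition zquat (a b c d : Z) : quat := Quat (IZR a) (IZR b) (IZR c) (IZR d).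

Definition lipschitz (x : quat) : Prop := exists a b c d : Z, x = zquat a b c d.

Lemma lipschitz0 : lipschitz qzero.
Proof. now exists 0%Z, 0%Z, 0%Z, 0%Z. Qed.
Lemma lipschitz1 : lipschitz qone.
Proof. now exists 1%Z, 0%Z, 0%Z, 0%Z. Qed.
Lemma lipschitz_omega b c d : lipschitz (omega b c d).
Proof. now exists 0%Z, b, c, d. Qed.

Lemma qadd_zquat a b c d a' b' c' d' :
  qadd (zquat a b c d) (zquat a' b' c' d') = zquat (a + a') (b + b') (c + c') (d + d').
Proof. unfold qadd, zquat; cbn. now rewrite !plus_IZR. Qed.

Lemma qmul_zquat a b c d a' b' c' d' :
  qmul (zquat a b c d) (zquat a' b' c' d') =
  zquat (a * a' - b * b' - c * c' - d * d') (a * b' + b * a' + c * d' - d * c')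
        (a * c' - b * d' + c * a' + d * b') (a * d' + b * c' - c * b' + d * a').
Proof.
  unfold qmul, zquat; cbn. f_equal; now repeat rewrite ?minus_IZR, ?plus_IZR, ?mult_IZR.
Qed.

Lemma lipschitz_add x y : lipschitz x -> lipschitz y -> lipschitz (qadd x y).
Proof.
  intros (a & b & c & d & ->) (a' & b' & c' & d' & ->).
  rewrite qadd_zquat; eexists _, _, _, _; reflexivity.
Qed.

Lemma lipschitz_mul x y : lipschitz x -> lipschitz y -> lipschitz (qmul x y).
Proof.
  intros (a & b & c & d & ->) (a' & b' & c' & d' & ->).
  rewrite qmul_zquat; eexists _, _, _, _; reflexivity.
Qed.

Definition lipschitz_mat (M : mat2) : Prop :=
  lipschitz (ma M) /\ lipschitz (mb M) /\ lipschitz (mc M) /\ lipschitz (md M).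

Definition row_module (X : mat2) (z : quat) : Prop :=
  exists x y, lipschitz x /\ lipschitz y /\ z = qadd (qmul (ma X) x) (qmul (mb X) y).

Definition homothetic (Y X : mat2) : Prop :=
  exists mu, mu <> 0 /\ forall z, row_module Y z <-> row_module X (qscale mu z).

Lemma row_module_Dm p z : row_module (Dm p) z <-> exists x, lipschitz x /\ z = qmul p x.
Proof.
  unfold row_module; cbn; split.
  - intros (x & y & Hx & _ & ->). exists x; split; auto. now rewrite qmul0q, qaddq0.
  - intros (x & Hx & ->). exists x, qzero; repeat split; auto using lipschitz0.
    now rewrite qmul0q, qaddq0.
Qed.

Lemma row_module_mulr X M z :
  lipschitz_mat M -> row_module (mmul X M) z -> row_module X z.
Proof.
  intros (Ha & Hb & Hc & Hd) (x & y & Hx & Hy & ->).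
  exists (qadd (qmul (ma M) x) (qmul (mb M) y)), (qadd (qmul (mc M) x) (qmul (md M) y)).
  repeat split; try (apply lipschitz_add; apply lipschitz_mul; auto).
  cbn; rewrite !qmul_addl, !qmul_addr, !qmul_assoc. apply qadd_addACA.
Qed.

Lemma homothetic_refl X : homothetic X X.
Proof. exists 1; split; [lra |]. intro z; now rewrite qscale1. Qed.

Lemma homothetic_trans Y X W : homothetic Y X -> homothetic X W -> homothetic Y W.
Proof.
  intros [m [Hm H1]] [n [Hn H2]]. exists (n * m); split.
  - now apply Rmult_integral_contrapositive.
  - intro z. rewrite H1, H2, qscaleA. tauto.
Qed.

Lemma homothetic_mscale l X : l <> 0 -> homothetic (mscale l X) X.
Proof.
  intros Hl. exists (/ l); split; [now apply Rinv_neq_0_compat |]. intro z; split.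
  - intros (x & y & Hx & Hy & ->). exists x, y; repeat split; auto.
    destruct_quats; quat_ext; field; auto.
  - intros (x & y & Hx & Hy & E). exists x, y; repeat split; auto.
    apply (f_equal (qscale l)) in E.
    rewrite qscaleA, Rinv_r, qscale1 in E by auto.
    rewrite E. destruct_quats; quat_ext; ring.
Qed.

Lemma homothetic_mul_unimodular X g gi :
  lipschitz_mat g -> lipschitz_mat gi -> mmul g gi = mid -> homothetic (mmul X g) X.
Proof.
  intros Hg Hgi E. exists 1; split; [lra |]. intro z; rewrite qscale1; split.
  - now apply row_module_mulr.
  - intros Hz. apply (row_module_mulr _ gi); auto.
    now rewrite mmul_assoc, E, mmul_m1.
Qed.

Lemma gens_L_inv g : gens_L g -> exists gi, gens_L gi /\ mmul g gi = mid.
Proof.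
  intros [-> | (b & c & d & ->)].
  - exists Tm; split; [now left |]. quat_ext; ring.
  - exists (tau (omega (- b) (- c) (- d))); split; [right; eauto |].
    quat_ext; rewrite ?opp_IZR; ring.
Qed.

Lemma gens_L_lipschitz g : gens_L g -> lipschitz_mat g.
Proof.
  intros [-> | (b & c & d & ->)]; repeat split; cbn;
    auto using lipschitz0, lipschitz1, lipschitz_omega.
Qed.

Lemma homothetic_mul_PSL2_L X l : PSL2_L l -> homothetic (mmul X l) X.
Proof.
  intros Hl. revert X.
  apply (gen_grp_ind_left gens_L (fun l => forall X, homothetic (mmul X l) X));
    auto using gens_L_inv.
  - intro X. rewrite mmul_m1. apply homothetic_refl.
  - intros g h Hg IH X. rewrite <- mmul_assoc.
    apply (homothetic_trans _ (mmul X g)); [apply IH |].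
    destruct (gens_L_inv g Hg) as [gi [Hgi E]].
    apply (homothetic_mul_unimodular _ g gi); auto using gens_L_lipschitz.
  - intros A B IH [l' [Hl' ->]] X. rewrite mmul_scaler.
    apply (homothetic_trans _ (mmul X A)); auto using homothetic_mscale.
Qed.

Lemma same_lcoset_homothetic X Y : same_lcoset PSL2_L X Y -> homothetic Y X.
Proof.
  intros (l & Hl & l' & Hl' & ->).
  apply (homothetic_trans _ (mmul X l)); auto using homothetic_mscale, homothetic_mul_PSL2_L.
Qed.

Lemma IZR_neq_quarter n : IZR n <> / 4.
Proof.
  intros H. assert (H4 : IZR (4 * n) = IZR 1) by (rewrite mult_IZR, H; cbn; field).
  apply eq_IZR in H4. lia.
Qed.

(* If [q L = mu^-1 p L], then [mu p^-1 q] and [mu^-1 q^-1 p] are Lipschitz and the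
   product of their real parts is [Re(p^-1 q)^2]. *)
Lemma not_homothetic_Dm p q : qnorm2 p = 1 -> qnorm2 q = 1 ->
  (forall n : Z, IZR n <> qr (qmul (qconj p) q) ^ 2) -> ~ homothetic (Dm q) (Dm p).
Proof.
  intros Hp Hq Hn [mu [Hmu H]].
  assert (Hx : row_module (Dm p) (qscale mu q)).
  { apply H, row_module_Dm. exists qone; split; [apply lipschitz1 | now rewrite qmulq1]. }
  assert (Hy : row_module (Dm q) (qscale (/ mu) p)).
  { apply H, row_module_Dm. exists qone; split; [apply lipschitz1 |].
    rewrite qscaleA, Rinv_r, qscale1, qmulq1; auto. }
  apply row_module_Dm in Hx as (x & (a & a1 & a2 & a3 & ->) & Eq).
  apply row_module_Dm in Hy as (y & (b & b1 & b2 & b3 & ->) & Ep).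
  apply (f_equal (qmul (qconj p))) in Eq. apply (f_equal (qmul (qconj q))) in Ep.
  rewrite qmul_conj_unitK, qmul_scaler in Eq, Ep by auto.
  apply (f_equal qr) in Eq, Ep. unfold qscale, zquat in Eq, Ep. cbn [qr] in Eq, Ep.
  rewrite qr_conj_mulC in Ep.
  apply (Hn (a * b)%Z). rewrite mult_IZR, <- Eq, <- Ep. field; auto.
Qed.

Definition lipschitz_unit (v : quat) : Prop :=
  v = Quat 1 0 0 0 \/ v = Quat (-1) 0 0 0 \/ v = Quat 0 1 0 0 \/ v = Quat 0 (-1) 0 0 \/
  v = Quat 0 0 1 0 \/ v = Quat 0 0 (-1) 0 \/ v = Quat 0 0 0 1 \/ v = Quat 0 0 0 (-1).

(* [(tau x T)^3 = [[x^3 + 2x, x^2 + 1], [x^2 + 1, x]]]. *)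
Lemma tauT_cube x : qadd (qmul x x) qone = qzero ->
  mmul (mmul (tau x) Tm) (mmul (mmul (tau x) Tm) (mmul (tau x) Tm)) = Dm x.
Proof.
  intros Hx.
  assert (EM : mmul (tau x) Tm = Mat2 x qone qone qzero) by (destruct_quats; quat_ext; ring).
  rewrite EM; unfold mmul, Dm; cbn.
  rewrite ?qmul1q, ?qmulq1, ?qmul0q, ?qmulq0, ?qadd0q, ?qaddq0, Hx.
  now rewrite ?qmulq0, ?qadd0q.
Qed.

Lemma PSL2_L_Dm_omega b c d :
  qadd (qmul (omega b c d) (omega b c d)) qone = qzero -> PSL2_L (Dm (omega b c d)).
Proof.
  intros Hx. rewrite <- (tauT_cube _ Hx).
  assert (HM : PSL2_L (mmul (tau (omega b c d)) Tm)).
  { apply gen_grp_mul; apply gen_grp_gen; [right; eauto | now left]. }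
  now apply gen_grp_mul; [| apply gen_grp_mul].
Qed.

Lemma PSL2_L_Dm_opp v u : PSL2_L (Dm v) -> u = qscale (-1) v -> PSL2_L (Dm u).
Proof.
  intros Hv ->. apply (gg_proj _ _ _ Hv). exists (-1); split; [lra | apply Dm_scale].
Qed.

Lemma PSL2_L_Dm_lipschitz_unit v : lipschitz_unit v -> PSL2_L (Dm v).
Proof.
  assert (H1 : PSL2_L (Dm (Quat 1 0 0 0))) by apply gg_one.
  assert (Hi : PSL2_L (Dm (Quat 0 1 0 0)))
    by (apply (PSL2_L_Dm_omega 1 0 0); quat_ext; ring).
  assert (Hj : PSL2_L (Dm (Quat 0 0 1 0)))
    by (apply (PSL2_L_Dm_omega 0 1 0); quat_ext; ring).
  assert (Hk : PSL2_L (Dm (Quat 0 0 0 1)))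
    by (apply (PSL2_L_Dm_omega 0 0 1); quat_ext; ring).
  intros [-> | [-> | [-> | [-> | [-> | [-> | [-> | ->]]]]]]]; auto;
    [apply (PSL2_L_Dm_opp _ _ H1) | apply (PSL2_L_Dm_opp _ _ Hi)
    | apply (PSL2_L_Dm_opp _ _ Hj) | apply (PSL2_L_Dm_opp _ _ Hk)]; quat_ext; ring.
Qed.

Definition hw : quat := Quat (/ 2) (/ 2) (/ 2) (/ 2).

Lemma qnorm2_qpow_hw k : qnorm2 (qpow hw k) = 1.
Proof.
  induction k as [|k IH]; cbn [qpow].
  - unfold qnorm2, qone; cbn; ring.
  - rewrite qnorm2M, IH. unfold qnorm2, hw; cbn; field.
Qed.

Lemma Tm_mul_Dm u : mmul Tm (Dm u) = mmul (Dm u) Tm.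
Proof. destruct_quats; quat_ext; ring. Qed.

Lemma tau_mul_Dhw b c d :
  mmul (tau (omega b c d)) (Dm hw) = mmul (Dm hw) (tau (omega c d b)).
Proof. unfold hw; quat_ext; field. Qed.

Lemma PSL2_L_mul_Dhw l :
  PSL2_L l -> exists l', PSL2_L l' /\ mmul l (Dm hw) = mmul (Dm hw) l'.
Proof.
  apply (gen_grp_ind_left gens_L
    (fun l => exists l', PSL2_L l' /\ mmul l (Dm hw) = mmul (Dm hw) l'));
    auto using gens_L_inv.
  - exists mid; split; [apply gg_one | now rewrite mmul_1m, mmul_m1].
  - intros g h Hg (h' & Hh' & E). rewrite mmul_assoc, E, <- mmul_assoc.
    destruct Hg as [-> | (b & c & d & ->)].
    + rewrite Tm_mul_Dm, mmul_assoc. exists (mmul Tm h'); split; auto.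
      apply gg_mul; auto. now left.
    + rewrite tau_mul_Dhw, mmul_assoc. exists (mmul (tau (omega c d b)) h'); split; auto.
      apply gg_mul; auto. right; eauto.
  - intros A B (A' & HA' & E) [s [Hs ->]].
    exists (mscale s A'); split.
    + apply (gg_proj _ _ _ HA'). exists s; auto.
    + now rewrite mmul_scalel, mmul_scaler, E.
Qed.

Lemma PSL2_L_mul_Dhw_pow k l : PSL2_L l ->
  exists l', PSL2_L l' /\ mmul l (Dm (qpow hw k)) = mmul (Dm (qpow hw k)) l'.
Proof.
  revert l; induction k as [|k IH]; intros l Hl.
  - exists l; split; auto. change (Dm (qpow hw 0)) with mid. now rewrite mmul_1m, mmul_m1.
  - cbn [qpow]. rewrite <- Dm_mul, <- mmul_assoc.
    destruct (IH l Hl) as (l1 & Hl1 & ->).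
    destruct (PSL2_L_mul_Dhw l1 Hl1) as (l2 & Hl2 & E).
    exists l2; split; auto. now rewrite mmul_assoc, E, mmul_assoc.
Qed.

Lemma Dm_qpow_hw_mod3 k :
  exists r, (r < 3)%nat /\ proj_eq (Dm (qpow hw k)) (Dm (qpow hw r)).
Proof.
  induction k as [|k (r & Hr & P)].
  - exists 0%nat; split; [lia | apply proj_eq_refl].
  - assert (P' : proj_eq (Dm (qpow hw (S k))) (Dm (qpow hw (S r)))).
    { cbn [qpow]. rewrite <- !Dm_mul. now apply proj_eq_mulr. }
    destruct (Nat.eq_dec r 2) as [-> | Hr2].
    + exists 0%nat; split; [lia |]. apply (proj_eq_trans _ _ _ P').
      exists (-1); split; [lra |]. unfold hw; cbn [qpow]; quat_ext; field.
    + exists (S r); split; [lia | exact P'].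
Qed.

Lemma PSL2_H_Dm_qpow_hw k : PSL2_H (Dm (qpow hw k)).
Proof.
  induction k as [|k IH]; [apply gg_one |].
  cbn [qpow]; rewrite <- Dm_mul. apply gen_grp_mul; [exact IH |].
  apply gen_grp_gen. right. exists hw; split; auto.
  do 8 right. unfold hw; cbn. rewrite Rabs_pos_eq by lra. auto.
Qed.

Lemma hurwitz_unit_qnorm2 u : hurwitz_unit u -> qnorm2 u = 1.
Proof.
  unfold qnorm2.
  intros [-> | [-> | [-> | [-> | [-> | [-> | [-> | [-> | (H0 & H1 & H2 & H3)]]]]]]]];
    [cbn; ring .. |].
  rewrite <- (pow2_abs (qr u)), <- (pow2_abs (qi u)), <- (pow2_abs (qj u)),
    <- (pow2_abs (qk u)), H0, H1, H2, H3. field.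
Qed.

Lemma hurwitz_unit_conj u : hurwitz_unit u -> hurwitz_unit (qconj u).
Proof.
  unfold hurwitz_unit, qconj.
  intros [-> | [-> | [-> | [-> | [-> | [-> | [-> | [-> | (H0 & H1 & H2 & H3)]]]]]]]];
    [left | right; left | do 3 right; left | do 2 right; left | do 5 right; left
    | do 4 right; left | do 7 right; left | do 6 right; left | do 8 right];
    [quat_ext; ring .. |].
  cbn; rewrite !Rabs_Ropp; auto.
Qed.

Lemma gens_H_inv g : gens_H g -> exists gi, gens_H gi /\ mmul g gi = mid.
Proof.
  intros [HL | (u & Hu & ->)].
  - destruct (gens_L_inv g HL) as (gi & Hgi & E). exists gi; split; auto. now left.
  - exists (Dm (qconj u)); split.
    + right. exists (qconj u); auto using hurwitz_unit_conj.
    + now rewrite Dm_mul, qmul_conjr, hurwitz_unit_qnorm2.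
Qed.

Lemma qconj_qpow_hw1 : qconj (qpow hw 1) = qscale (/ 2) (zquat 1 (-1) (-1) (-1)).
Proof. unfold hw, zquat; cbn [qpow]; quat_ext; field. Qed.
Lemma qconj_qpow_hw2 : qconj (qpow hw 2) = qscale (/ 2) (zquat (-1) (-1) (-1) (-1)).
Proof. unfold hw, zquat; cbn [qpow]; quat_ext; field. Qed.

Lemma lipschitz_unit_quarter a b c d :
  In (a, b, c, d) [(4, 0, 0, 0); (-4, 0, 0, 0); (0, 4, 0, 0); (0, -4, 0, 0);
                   (0, 0, 4, 0); (0, 0, -4, 0); (0, 0, 0, 4); (0, 0, 0, -4)]%Z ->
  lipschitz_unit (qscale (/ 2 * / 2) (zquat a b c d)).
Proof.
  unfold lipschitz_unit, zquat.
  intros [E | [E | [E | [E | [E | [E | [E | [E | []]]]]]]]]; injection E as <- <- <- <-;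
    [left | right; left | do 2 right; left | do 3 right; left | do 4 right; left
    | do 5 right; left | do 6 right; left | do 7 right]; quat_ext; field.
Qed.

Lemma Rabs_half_sign x :
  Rabs x = / 2 -> exists s : Z, (s = 1 \/ s = -1)%Z /\ x = / 2 * IZR s.
Proof.
  unfold Rabs; destruct (Rcase_abs x); intros Hx; [exists (-1)%Z | exists 1%Z];
    split; auto; cbn; lra.
Qed.

(* For a half unit [u = (s0 + s1 i + s2 j + s3 k) / 2], the candidate
   [v = conj(hw^m) u] is a quarter of an integer quaternion, decided by computing in Z. *)
Ltac hurwitz_witness m :=
  exists m; split; [lia |];
  match goal with |- exists v, _ /\ ?u = _ =>
    exists (qmul (qconj (qpow hw m)) u); split;
      [ rewrite ?qconj_qpow_hw1, ?qconj_qpow_hw2, qmul_scale, qmul_zquat;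
        apply lipschitz_unit_quarter; cbn; tauto
      | now rewrite qmul_unit_conjK by apply qnorm2_qpow_hw ]
  end.

Lemma hurwitz_unit_decomp u : hurwitz_unit u ->
  exists m, (m < 3)%nat /\ exists v, lipschitz_unit v /\ u = qmul (qpow hw m) v.
Proof.
  intros [Hu | [Hu | [Hu | [Hu | [Hu | [Hu | [Hu | [Hu | (H0 & H1 & H2 & H3)]]]]]]]].
  1-8: exists 0%nat; split; [lia |]; exists u; split;
         [unfold lipschitz_unit; tauto | cbn [qpow]; now rewrite qmul1q].
  destruct (Rabs_half_sign _ H0) as (s0 & Hs0 & E0), (Rabs_half_sign _ H1) as (s1 & Hs1 & E1),
    (Rabs_half_sign _ H2) as (s2 & Hs2 & E2), (Rabs_half_sign _ H3) as (s3 & Hs3 & E3).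
  replace u with (qscale (/ 2) (zquat s0 s1 s2 s3))
    by (destruct u; unfold zquat, qscale; cbn in *; congruence).
  destruct Hs0 as [-> | ->], Hs1 as [-> | ->], Hs2 as [-> | ->], Hs3 as [-> | ->].
  all: first [hurwitz_witness 1%nat | hurwitz_witness 2%nat].
Qed.

Definition in_hw_cosets (h : mat2) : Prop :=
  exists k l, PSL2_L l /\ proj_eq h (mmul (Dm (qpow hw k)) l).

Lemma in_hw_cosets_proj A B : in_hw_cosets A -> proj_eq B A -> in_hw_cosets B.
Proof.
  intros (k & l & Hl & P) P'. exists k, l; split; auto. eapply proj_eq_trans; eauto.
Qed.

Lemma in_hw_cosets_mul s h : gens_H s -> in_hw_cosets h -> in_hw_cosets (mmul s h).
Proof.
  intros Hs (k & l & Hl & P).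
  apply (in_hw_cosets_proj (mmul s (mmul (Dm (qpow hw k)) l))); [| now apply proj_eq_mull].
  rewrite <- mmul_assoc.
  destruct Hs as [HL | (u & Hu & ->)].
  - destruct (PSL2_L_mul_Dhw_pow k s (gen_grp_gen _ _ HL)) as (s' & Hs' & ->).
    exists k, (mmul s' l); split; [now apply gen_grp_mul |].
    rewrite mmul_assoc; apply proj_eq_refl.
  - destruct (hurwitz_unit_decomp u Hu) as (m & _ & v & Hv & ->).
    replace (mmul (mmul (Dm (qmul (qpow hw m) v)) (Dm (qpow hw k))) l)
      with (mmul (Dm (qpow hw m)) (mmul (mmul (Dm v) (Dm (qpow hw k))) l))
      by (rewrite <- Dm_mul; now rewrite !mmul_assoc).
    destruct (PSL2_L_mul_Dhw_pow k _ (PSL2_L_Dm_lipschitz_unit v Hv)) as (v' & Hv' & ->).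
    exists (m + k)%nat, (mmul v' l); split; [now apply gen_grp_mul |].
    rewrite qpow_add, <- Dm_mul, !mmul_assoc. apply proj_eq_refl.
Qed.

Lemma PSL2_H_in_hw_cosets h : PSL2_H h -> in_hw_cosets h.
Proof.
  apply (gen_grp_ind_left gens_H in_hw_cosets);
    eauto using gens_H_inv, in_hw_cosets_mul, in_hw_cosets_proj.
  exists 0%nat, mid; split; [apply gg_one |]. rewrite mmul_m1. apply proj_eq_refl.
Qed.

Lemma Dm_qpow_hw_distinct i j : (i < 3)%nat -> (j < 3)%nat -> i <> j ->
  ~ same_lcoset PSL2_L (Dm (qpow hw i)) (Dm (qpow hw j)).
Proof.
  intros Hi Hj Hij Hc. apply same_lcoset_homothetic in Hc. revert Hc.
  apply not_homothetic_Dm; try apply qnorm2_qpow_hw.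
  enough (E : qr (qmul (qconj (qpow hw i)) (qpow hw j)) ^ 2 = / 4)
    by (rewrite E; apply IZR_neq_quarter).
  destruct i as [|[|[|]]], j as [|[|[|]]]; try lia; unfold hw; cbn [qpow];
    quat_ext; field.
Qed.

Theorem mainTheorem4 :
  subgroup_of PSL2_L PSL2_H /\ has_index PSL2_L PSL2_H 3.
Proof.
  split.
  - intros A. apply gen_grp_mono. now left.
  - exists (fun i => Dm (qpow hw i)); split; [|split].
    + intros i _. apply PSL2_H_Dm_qpow_hw.
    + apply Dm_qpow_hw_distinct.
    + intros h Hh.
      destruct (PSL2_H_in_hw_cosets h Hh) as (k & l & Hl & P).
      destruct (Dm_qpow_hw_mod3 k) as (r & Hr & Pr).
      exists r; split; auto. exists l; split; auto.
      apply (proj_eq_trans _ _ _ P). now apply proj_eq_mulr.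
Qed.
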